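(* Let $\alpha\geq 0$ and set $$f_{\alpha}(x)=\begin{cases} 0 & x<\sigma_0\\ \frac{2}{\alpha}(x-\sigma_0) & \sigma_0\leq x < (1+\frac{\alpha}{2})\sigma_0\\ (1+\frac{\alpha}{2})^{-1}x & (1+\frac{\alpha}{2})\sigma_0\leq x. \end{cases}$$ Then $\mathfrak{S}_{f_{\alpha}}(F)$ solves $$\operatorname{arg\,min}_X \mathscr{N}_F^{**}(X)+\frac{\alpha}{2} \|X\|_2^2,$$ where $\mathscr{N}_F^{**}(X)= \sum_j\left( \sigma_0^2-\left(\max\left(\sigma_0-\sigma_j(X),0\right)\right)^2\right) + \|X-F\|_2^2$.
   Context: $X,F$ are $M\times N$ matrices, $\|\cdot\|_2$ is the Frobenius norm, $\sigma_j(X)$ are the singular values of $X$, and $\sigma_0>0$ is a parameter. $\mathscr{N}_F^{**}$ is the convex envelope of $\mathscr{N}_F(X)=\sigma_0^2\operatorname{rank}(X)+\|X-F\|_2^2$. If $F=U\Sigma_\phi V^*$ is a singular value decomposition with singular values $\phi=(\phi_j)$, then for $f:[0,\infty)\to\mathbb{C}$, $\mathfrak{S}_f(F)=U\Sigma_{f(\phi)}V^*$, i.e. the singular values $\phi_j$ are replaced by $f(\phi_j)$. *)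

(* Scalars: an arbitrary numClosedFieldType C (e.g. algC, or
   the complex numbers R[i]); real quantities are elements of C that are real. *)
From HB Require Import structures.
From mathcomp Require Import all_boot all_order all_algebra.
Set Implicit Arguments. Unset Strict Implicit. Unset Printing Implicit Defensive.
Import Order.TTheory GRing.Theory Num.Theory.
Local Open Scope ring_scope.

Section Defs.
Variable C : numClosedFieldType.

Definition adjmx (m n : nat) (X : 'M[C]_(m, n)) : 'M[C]_(n, m) :=
  \matrix_(i < n, j < m) (X j i)^*.

Definition unitary (n : nat) (U : 'M[C]_n) : Prop := U *m adjmx U = 1%:M.

Definition rdiag (m n : nat) (s : nat -> C) : 'M[C]_(m, n) :=
  \matrix_(i < m, j < n) (if (i : nat) == j then s i else 0).

Definition is_svd (m n : nat) (U : 'M[C]_m) (s : nat -> C) (V : 'M[C]_n)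
  (X : 'M[C]_(m, n)) : Prop :=
  [/\ unitary U, unitary V,
      (forall j, (j < minn m n)%N -> 0 <= s j),
      (forall i j, (i <= j)%N -> (j < minn m n)%N -> s j <= s i)
    & X = U *m rdiag m n s *m adjmx V].

Definition Sfun (m n : nat) (f : C -> C) (U : 'M[C]_m) (phi : nat -> C)
  (V : 'M[C]_n) : 'M[C]_(m, n) :=
  U *m rdiag m n (fun j => f (phi j)) *m adjmx V.

Definition frob2 (m n : nat) (X : 'M[C]_(m, n)) : C :=
  \sum_(i < m) \sum_(j < n) `|X i j| ^+ 2.

Definition maxr0 (x : C) : C := if 0 <= x then x else 0.

(* N_F^{**}(X), where s are the singular values of X *)
Definition Nss (m n : nat) (sigma0 : C) (F X : 'M[C]_(m, n)) (s : nat -> C) : C :=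
  \sum_(j < minn m n) (sigma0 ^+ 2 - (maxr0 (sigma0 - s j)) ^+ 2) + frob2 (X - F).

Definition objective (m n : nat) (sigma0 alpha : C) (F X : 'M[C]_(m, n))
  (s : nat -> C) : C :=
  Nss sigma0 F X s + alpha / 2%:R * frob2 X.

Definition f_alpha (sigma0 alpha x : C) : C :=
  if x < sigma0 then 0
  else if x < (1 + alpha / 2%:R) * sigma0 then 2%:R / alpha * (x - sigma0)
  else (1 + alpha / 2%:R)^-1 * x.

End Defs.

(* Write h_phi(x) = sigma0^2 - max(sigma0 - x, 0)^2 + (x - phi)^2 + alpha/2 x^2.
   The objective at X depends on X only through its singular values s and through
   Re <X, F>; von Neumann's trace inequality Re <X, F> <= sum_j s_j phi_j bounds it
   below by sum_j h_(phi_j)(s_j), with equality when X shares the singular vectors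
   of F.  So the problem decouples into scalar problems, and f_alpha(phi) minimises
   h_phi on [0, oo): h_phi is a convex quadratic on each side of sigma0, and
   f_alpha(phi) is the minimiser of the branch where it lands.
   For the trace inequality, write <X, F> = sum_(i,k) s_i phi_k Q_ik P_ki with Q, P
   unitary; then 2 Re (Q_ik P_ki) <= |Q_ik|^2 + |P_ki|^2, a matrix whose rows and
   columns sum to at most 2, and a rearrangement inequality for nonincreasing
   sequences against such weights finishes the argument. *)

From mathcomp Require Import all_boot all_order all_algebra.
From mathcomp Require Import ring.
Import Order.TTheory GRing.Theory Num.Theory.
Set Implicit Arguments. Unset Strict Implicit. Unset Printing Implicit Defensive.
Local Open Scope ring_scope.

Lemma sum_ord_narrow (V : nmodType) r m (le_rm : (r <= m)%N) (F : 'I_m -> V) :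
  (forall i : 'I_m, (r <= i)%N -> F i = 0) ->
  \sum_(i < m) F i = \sum_(i < r) F (widen_ord le_rm i).
Proof.
move=> F0; rewrite -big_ord_narrow (bigID (fun i : 'I_m => (i < r)%N)) /=.
by rewrite [X in _ + X]big1 ?addr0 // => i; rewrite -leqNgt => /F0.
Qed.

Lemma ler_sum_ord_narrow (R : numDomainType) r m (le_rm : (r <= m)%N) (F : 'I_m -> R) :
  (forall i : 'I_m, (r <= i)%N -> 0 <= F i) ->
  \sum_(i < r) F (widen_ord le_rm i) <= \sum_(i < m) F i.
Proof.
move=> F0; rewrite -big_ord_narrow [X in _ <= X](bigID (fun i : 'I_m => (i < r)%N)) /=.
by rewrite lerDl sumr_ge0 // => i; rewrite -leqNgt => /F0.
Qed.

Section Rearrangement.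
Variables (R : numDomainType) (c : R).

Definition nonincreasing_nonneg (r : nat) (s : nat -> R) : Prop :=
  (forall i, (i < r)%N -> 0 <= s i) /\ (forall i j, (i <= j)%N -> (j < r)%N -> s j <= s i).

Lemma sum_row_weighted_le r (a : nat -> R) (D : nat -> nat -> R) :
  (forall i, (i < r)%N -> 0 <= a i) -> (forall i, (i < r)%N -> \sum_(k < r) D i k <= c) ->
  \sum_(i < r) \sum_(k < r) a i * D i k <= c * \sum_(i < r) a i.
Proof.
move=> a0 Dr; rewrite mulr_sumr; apply: ler_sum => i _.
by rewrite -mulr_sumr [c * _]mulrC ler_wpM2l ?a0 ?Dr.
Qed.

Lemma sum_substochastic_le r (s p : nat -> R) (D : nat -> nat -> R) :
  nonincreasing_nonneg r s -> nonincreasing_nonneg r p ->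
  (forall i k, (i < r)%N -> (k < r)%N -> 0 <= D i k) ->
  (forall i, (i < r)%N -> \sum_(k < r) D i k <= c) ->
  (forall k, (k < r)%N -> \sum_(i < r) D i k <= c) ->
  \sum_(i < r) \sum_(k < r) s i * p k * D i k <= c * \sum_(i < r) s i * p i.
Proof.
elim: r s p D => [|r IH] s p D [s0 s_decr] [p0 p_decr] D0 Dr Dc.
  by rewrite !big_ord0 mulr0.
(* Subtracting the last values s_r and p_r splits the sum into two terms bounded
   by row or column sums, and one whose last row and column vanish. *)
pose s' i := s i - s r; pose p' i := p i - p r.
have s'0 i : (i < r.+1)%N -> 0 <= s' i by move=> ?; rewrite subr_ge0 s_decr.
have p'0 i : (i < r.+1)%N -> 0 <= p' i by move=> ?; rewrite subr_ge0 p_decr.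
have split_prod i k :
    s i * p k * D i k = s r * p k * D i k + p r * s' i * D i k + s' i * p' k * D i k.
  by rewrite /s' /p'; ring.
have split_diag i : s i * p i = s r * p i + p r * s' i + s' i * p' i.
  by rewrite /s' /p'; ring.
under eq_bigr do under eq_bigr do rewrite split_prod.
under eq_bigr do rewrite !big_split.
under [X in _ <= c * X]eq_bigr do rewrite split_diag.
rewrite !big_split /= !mulrDr.
apply: lerD; first apply: lerD.
- rewrite exchange_big /=.
  apply: (sum_row_weighted_le (a := fun k => s r * p k) (D := fun k i => D i k)) => //.
  by move=> k kr; rewrite mulr_ge0 ?s0 ?p0.
- apply: (sum_row_weighted_le (a := fun i => p r * s' i)) => // i ir.
  by rewrite mulr_ge0 ?p0 ?s'0.
have [s'r p'r] : s' r = 0 /\ p' r = 0 by rewrite /s' /p' !subrr.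
rewrite big_ord_recr /= s'r [X in _ + X]big1 ?addr0 => [|k _]; last by rewrite !mul0r.
under eq_bigr do rewrite big_ord_recr /= p'r mulr0 mul0r addr0.
rewrite [X in _ <= c * X]big_ord_recr /= s'r mul0r addr0.
apply: IH => [||i k ir kr|i ir|k kr].
- split=> [i ir|i j ij jr]; first exact: s'0 _ (ltnW ir).
  by rewrite lerD2r s_decr // ltnW.
- split=> [i ir|i j ij jr]; first exact: p'0 _ (ltnW ir).
  by rewrite lerD2r p_decr // ltnW.
- exact: D0 (ltnW ir) (ltnW kr).
- apply: le_trans (Dr i (ltnW ir)); rewrite [X in _ <= X]big_ord_recr /= lerDl.
  exact: D0 (ltnW ir) (ltnSn r).
- apply: le_trans (Dc k (ltnW kr)); rewrite [X in _ <= X]big_ord_recr /= lerDl.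
  exact: D0 (ltnSn r) (ltnW kr).
Qed.

End Rearrangement.

Section Matrices.
Variable C : numClosedFieldType.
Implicit Types (p q : nat).

(* Entries of [A] indexed by [nat], with junk value [0] outside the bounds. *)
Definition natmx p q (A : 'M[C]_(p, q)) (i j : nat) : C :=
  if insub i is Some i' then if insub j is Some j' then A i' j' else 0 else 0.

Lemma natmxE p q (A : 'M[C]_(p, q)) (i : 'I_p) (j : 'I_q) : natmx A i j = A i j.
Proof. by rewrite /natmx !valK. Qed.

Lemma natmx_outl p q (A : 'M[C]_(p, q)) i j : (p <= i)%N -> natmx A i j = 0.
Proof. by move=> pi; rewrite /natmx insubF // ltnNge pi. Qed.

Lemma rdiag_mulmx p q k (s : nat -> C) (A : 'M[C]_(q, k)) (i : 'I_p) (j : 'I_k) :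
  (rdiag p q s *m A) i j = s i * natmx A i j.
Proof.
rewrite mxE (eq_bigr (fun l : 'I_q => if (l == i :> nat) then s i * natmx A i j else 0)).
  rewrite -big_mkcond (big_ord1_eq _ (fun=> s i * natmx A i j)).
  by case: ltnP => // qi; rewrite natmx_outl ?mulr0.
by move=> l _; rewrite mxE eq_sym; case: eqP => [<-|]; rewrite ?natmxE ?mul0r.
Qed.

Lemma adjmxM p q k (A : 'M[C]_(p, q)) (B : 'M[C]_(q, k)) :
  adjmx (A *m B) = adjmx B *m adjmx A.
Proof.
apply/matrixP => i j; rewrite !mxE rmorph_sum; apply: eq_bigr => l _.
by rewrite !mxE rmorphM mulrC.
Qed.

Lemma adjmxK p q (A : 'M[C]_(p, q)) : adjmx (adjmx A) = A.
Proof. by apply/matrixP => i j; rewrite !mxE conjCK. Qed.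

Lemma adjmxB p q (A B : 'M[C]_(p, q)) : adjmx (A - B) = adjmx A - adjmx B.
Proof. by apply/matrixP => i j; rewrite !mxE rmorphB. Qed.

Lemma adjmx_rdiag p q (s : nat -> C) :
  adjmx (rdiag p q s) = rdiag q p (fun j => (s j)^*).
Proof. by apply/matrixP => i j; rewrite !mxE eq_sym; case: eqP => [->|]; rewrite ?conjC0. Qed.

Lemma rdiagB m n (a b : nat -> C) :
  rdiag m n a - rdiag m n b = rdiag m n (fun j => a j - b j).
Proof. by apply/matrixP => i j; rewrite !mxE; case: eqP; rewrite ?subr0. Qed.

Lemma mxtrace_adjmx p (A : 'M[C]_p) : \tr (adjmx A) = (\tr A)^*.
Proof. by rewrite /mxtrace rmorph_sum; apply: eq_bigr => i _; rewrite mxE. Qed.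

Lemma unitary_adjmx_mul p (A : 'M[C]_p) : unitary A -> adjmx A *m A = 1%:M.
Proof. exact: mulmx1C. Qed.

Lemma unitary_adjmx_mulmx p (A B : 'M[C]_p) :
  unitary A -> unitary B -> unitary (adjmx A *m B).
Proof.
move=> uA uB; rewrite /unitary adjmxM adjmxK mulmxA -(mulmxA _ B) uB mulmx1.
exact: unitary_adjmx_mul.
Qed.

Lemma unitary_row_norm2 p (W : 'M[C]_p) i : unitary W -> (i < p)%N ->
  \sum_(k < p) `|natmx W i k| ^+ 2 = 1.
Proof.
move=> uW ip; have := congr1 (fun M : 'M[C]_p => M (Ordinal ip) (Ordinal ip)) uW.
rewrite /= !mxE eqxx => e; apply: etrans e; apply: eq_bigr => k _.
by rewrite mxE -normCK (natmxE W (Ordinal ip)).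
Qed.

Lemma unitary_col_norm2 p (W : 'M[C]_p) i : unitary W -> (i < p)%N ->
  \sum_(k < p) `|natmx W k i| ^+ 2 = 1.
Proof.
move=> /unitary_adjmx_mul uW ip.
have := congr1 (fun M : 'M[C]_p => M (Ordinal ip) (Ordinal ip)) uW.
rewrite /= !mxE eqxx => e; apply: etrans e; apply: eq_bigr => k _.
by rewrite mxE mulrC -normCK (natmxE W k (Ordinal ip)).
Qed.

Lemma mxtrace_rdiag_mulmx p q (s t : nat -> C) (Q : 'M[C]_q) (P : 'M[C]_p) :
  \tr (rdiag p q s *m Q *m rdiag q p t *m P) =
  \sum_(i < minn p q) \sum_(k < minn p q) s i * natmx Q i k * (t k * natmx P k i).
Proof.
rewrite -mulmxA /mxtrace.
under eq_bigr do rewrite mxE; under eq_bigr do under eq_bigr do rewrite !rdiag_mulmx.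
rewrite (sum_ord_narrow (geq_minl p q)) => [|i]; last first.
  rewrite geq_min leqNgt ltn_ord /= => qi.
  by apply: big1 => k _; rewrite natmx_outl ?mulr0 ?mul0r.
apply: eq_bigr => i _; rewrite (sum_ord_narrow (geq_minr p q)) // => k.
by rewrite geq_min [(q <= k)%N]leqNgt ltn_ord orbF => pk; rewrite (natmx_outl P) ?mulr0.
Qed.

Definition mxinner p q (X Y : 'M[C]_(p, q)) : C := \tr (X *m adjmx Y).

Lemma frob2_mxinner p q (A : 'M[C]_(p, q)) : frob2 A = mxinner A A.
Proof.
rewrite /frob2 /mxinner /mxtrace; apply: eq_bigr => i _; rewrite mxE.
by apply: eq_bigr => j _; rewrite mxE normCK.
Qed.

Lemma frob2B p q (X Y : 'M[C]_(p, q)) :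
  frob2 (X - Y) = frob2 X + frob2 Y - (mxinner X Y + (mxinner X Y)^*).
Proof.
have YX : \tr (Y *m adjmx X) = (mxinner X Y)^* by rewrite -mxtrace_adjmx adjmxM adjmxK.
rewrite !frob2_mxinner /mxinner adjmxB mulmxBl !mulmxBr !raddfB /= YX; ring.
Qed.

Lemma frob2_unitary_mulmx p q (U : 'M[C]_p) (V : 'M[C]_q) (M : 'M[C]_(p, q)) :
  unitary U -> unitary V -> frob2 (U *m M *m adjmx V) = frob2 M.
Proof.
move=> uU uV; rewrite !frob2_mxinner /mxinner !adjmxM adjmxK.
rewrite -!mulmxA (mulmxA (adjmx V)) (unitary_adjmx_mul uV) mul1mx.
by rewrite mxtrace_mulC -mulmxA -(mulmxA _ _ U) (unitary_adjmx_mul uU) mulmx1.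
Qed.

Lemma frob2_rdiag p q (t : nat -> C) :
  frob2 (rdiag p q t) = \sum_(j < minn p q) `|t j| ^+ 2.
Proof.
rewrite /frob2 (sum_ord_narrow (geq_minl p q)) => [|i]; last first.
  rewrite geq_min leqNgt ltn_ord /= => qi; apply: big1 => j _; rewrite mxE.
  case: eqP => [ij|]; last by rewrite normr0 expr0n.
  by move: (ltn_ord j); rewrite -ij ltnNge qi.
apply: eq_bigr => i _; rewrite (bigD1 (widen_ord (geq_minr p q) i)) //= mxE eqxx.
rewrite big1 ?addr0 // => j ji; rewrite mxE; case: eqP => [ij|]; last by rewrite normr0 expr0n.
by case/eqP: ji; apply: val_inj.
Qed.

Lemma mul_add_conj_le (a b : C) : a * b + (a * b)^* <= `|a| ^+ 2 + `|b| ^+ 2.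
Proof.
rewrite -subr_ge0; have -> : `|a| ^+ 2 + `|b| ^+ 2 - (a * b + (a * b)^*) = `|a - b^*| ^+ 2.
  by rewrite !normCK rmorphB rmorphM /= conjCK; ring.
exact: exprn_ge0.
Qed.

Lemma unitary_row_norm2_le p r (W : 'M[C]_p) i : unitary W -> (r <= p)%N -> (i < p)%N ->
  \sum_(k < r) `|natmx W i k| ^+ 2 <= 1.
Proof.
move=> uW rp ip; rewrite -(unitary_row_norm2 uW ip).
by apply: (ler_sum_ord_narrow rp (F := fun k => `|natmx W i k| ^+ 2)) => k _; rewrite exprn_ge0.
Qed.

Lemma unitary_col_norm2_le p r (W : 'M[C]_p) i : unitary W -> (r <= p)%N -> (i < p)%N ->
  \sum_(k < r) `|natmx W k i| ^+ 2 <= 1.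
Proof.
move=> uW rp ip; rewrite -(unitary_col_norm2 uW ip).
by apply: (ler_sum_ord_narrow rp (F := fun k => `|natmx W k i| ^+ 2)) => k _; rewrite exprn_ge0.
Qed.

Lemma frob2_unitary_rdiag m n (U : 'M[C]_m) (V : 'M[C]_n) (t : nat -> C) :
  unitary U -> unitary V -> (forall j, (j < minn m n)%N -> t j \is Num.real) ->
  frob2 (U *m rdiag m n t *m adjmx V) = \sum_(j < minn m n) t j ^+ 2.
Proof.
move=> uU uV tR; rewrite frob2_unitary_mulmx // frob2_rdiag.
by apply: eq_bigr => j _; rewrite real_normK ?tR.
Qed.

Lemma mxinner_svd_le m n (U U' : 'M[C]_m) (V V' : 'M[C]_n) (phi s : nat -> C)
    (F X : 'M[C]_(m, n)) :
  is_svd U phi V F -> is_svd U' s V' X ->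
  mxinner X F + (mxinner X F)^* <= 2%:R * \sum_(j < minn m n) s j * phi j.
Proof.
case=> uU uV phi0 phi_decr ->; case=> uU' uV' s0 s_decr ->.
set r := minn m n; set Q := adjmx V' *m V; set P := adjmx U *m U'.
have [uQ uP] : unitary Q /\ unitary P by split; apply: unitary_adjmx_mulmx.
have [phiR sR] : (forall k, (k < r)%N -> (phi k)^* = phi k) /\
                 (forall i, (i < r)%N -> (s i)^* = s i).
  by split=> j jr; apply/conj_Creal/ger0_real; [apply: phi0 | apply: s0].
have -> : mxinner (U' *m rdiag m n s *m adjmx V') (U *m rdiag m n phi *m adjmx V) =
    \tr (rdiag m n s *m Q *m rdiag n m (fun k => (phi k)^*) *m P).
  rewrite /mxinner /Q /P !adjmxM adjmxK adjmx_rdiag.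
  by rewrite -!mulmxA mxtrace_mulC !mulmxA.
rewrite mxtrace_rdiag_mulmx -/r.
pose D i k := `|natmx Q i k| ^+ 2 + `|natmx P k i| ^+ 2.
apply: le_trans (_ : _ <= \sum_(i < r) \sum_(k < r) s i * phi k * D i k) _.
  rewrite rmorph_sum -big_split; apply: ler_sum => i _ /=.
  rewrite rmorph_sum -big_split; apply: ler_sum => k _ /=.
  have -> : s i * natmx Q i k * ((phi k)^* * natmx P k i) =
      s i * phi k * (natmx Q i k * natmx P k i) by rewrite phiR //; ring.
  have -> : (s i * phi k * (natmx Q i k * natmx P k i))^* =
      s i * phi k * (natmx Q i k * natmx P k i)^* by rewrite !rmorphM /= sR ?phiR.
  by rewrite -mulrDr ler_wpM2l ?mul_add_conj_le // mulr_ge0 ?s0 ?phi0.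
have rm : (r <= m)%N := geq_minl m n; have rn : (r <= n)%N := geq_minr m n.
apply: sum_substochastic_le => [||i k _ _|i ir|k kr].
- by split.
- by split.
- by rewrite addr_ge0 ?exprn_ge0.
- rewrite big_split mulr2n lerD //=.
    exact: unitary_row_norm2_le uQ rn (leq_trans ir rn).
  exact: unitary_col_norm2_le uP rm (leq_trans ir rm).
- rewrite big_split mulr2n lerD //=.
    exact: unitary_col_norm2_le uQ rn (leq_trans kr rn).
  exact: unitary_row_norm2_le uP rm (leq_trans kr rm).
Qed.

End Matrices.

Definition scalar_objective (C : numClosedFieldType) (sigma0 alpha phi x : C) : C :=
  sigma0 ^+ 2 - maxr0 (sigma0 - x) ^+ 2 + (x - phi) ^+ 2 + alpha / 2%:R * x ^+ 2.

Section ScalarProblem.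
Variables (C : numClosedFieldType) (sigma0 alpha phi : C).
Hypotheses (sigma0_gt0 : 0 < sigma0) (alpha_ge0 : 0 <= alpha) (phiR : phi \is Num.real).

Local Notation h := (scalar_objective sigma0 alpha phi).
Let beta := 1 + alpha / 2%:R.
Let lowq x := alpha / 2%:R * x ^+ 2 + 2%:R * x * (sigma0 - phi) + phi ^+ 2.
Let highq x := sigma0 ^+ 2 + (x - phi) ^+ 2 + alpha / 2%:R * x ^+ 2.

Let sigma0R : sigma0 \is Num.real := gtr0_real sigma0_gt0.
Let half_alpha_ge0 : 0 <= alpha / 2%:R := divr_ge0 alpha_ge0 (ler0n _ 2).
Let beta_gt0 : 0 < beta.
Proof. by apply: lt_le_trans ltr01 _; rewrite lerDl. Qed.

Lemma scalar_objective_low x : x <= sigma0 -> h x = lowq x.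
Proof. by move=> xs; rewrite /scalar_objective /maxr0 subr_ge0 xs /lowq; ring. Qed.

Lemma scalar_objective_high x : sigma0 <= x -> h x = highq x.
Proof.
move=> sx; rewrite /scalar_objective /highq (_ : maxr0 (sigma0 - x) = 0); first by ring.
rewrite /maxr0 subr_ge0; case: ifP => // xs.
by apply/eqP; rewrite subr_eq0 eq_le sx xs.
Qed.

Lemma lowq_le_scalar_objective x : x \is Num.real -> lowq x <= h x.
Proof.
move=> xR; have /orP[xs|sx] := real_leVge xR sigma0R.
  by rewrite scalar_objective_low.
rewrite scalar_objective_high //.
have -> : highq x = lowq x + (x - sigma0) ^+ 2 by rewrite /highq /lowq; ring.
by rewrite lerDl real_exprn_even_ge0 ?rpredB.
Qed.

Lemma scalar_objective_min_below x : phi < sigma0 -> 0 <= x -> h 0 <= h x.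
Proof.
move=> ps x0; rewrite scalar_objective_low ?(ltW sigma0_gt0) //.
apply: le_trans _ (lowq_le_scalar_objective (ger0_real x0)).
have -> : lowq x = lowq 0 + x * (alpha / 2%:R * x + 2%:R * (sigma0 - phi)).
  by rewrite /lowq; ring.
rewrite lerDl mulr_ge0 // addr_ge0 ?(mulr_ge0 half_alpha_ge0 x0) //.
by rewrite mulr_ge0 ?ler0n // subr_ge0 ltW.
Qed.

Lemma scalar_objective_min_between x : sigma0 <= phi -> phi < beta * sigma0 ->
  x \is Num.real -> h (2%:R / alpha * (phi - sigma0)) <= h x.
Proof.
move=> sp pb xR; set t := 2%:R / alpha * (phi - sigma0).
have alpha_neq0 : alpha != 0.
  apply/eqP=> a0; move: pb; rewrite /beta a0 mul0r addr0 mul1r => /lt_le_trans/(_ sp).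
  by rewrite ltxx.
have t_le : t <= sigma0.
  rewrite -subr_le0 (_ : t - sigma0 = 2%:R / alpha * (phi - beta * sigma0)).
    by rewrite mulr_ge0_le0 ?divr_ge0 ?ler0n // subr_le0 ltW.
  by rewrite /t /beta; field.
rewrite scalar_objective_low //; apply: le_trans _ (lowq_le_scalar_objective xR).
rewrite (_ : lowq x = lowq t + alpha / 2%:R * (x - t) ^+ 2); last by rewrite /lowq /t; field.
by rewrite lerDl mulr_ge0 // real_exprn_even_ge0 // rpredB // (ler_real t_le).
Qed.

Lemma scalar_objective_min_above x : beta * sigma0 <= phi -> x \is Num.real ->
  h (beta^-1 * phi) <= h x.
Proof.
move=> bp xR; set t := beta^-1 * phi.
have s_le_t : sigma0 <= t.
  rewrite -subr_ge0 (_ : t - sigma0 = beta^-1 * (phi - beta * sigma0)).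
    by rewrite mulr_ge0 ?invr_ge0 ?(ltW beta_gt0) // subr_ge0.
  by rewrite /t; field; rewrite lt0r_neq0.
have highq_t y : highq y = highq t + beta * (y - t) ^+ 2.
  by rewrite /highq /t /beta; field; exact: lt0r_neq0 (ltr_wpDr alpha_ge0 (ltr0Sn C 1)).
have highq_t_le y : y \is Num.real -> highq t <= highq y.
  move=> yR; rewrite (highq_t y) lerDl mulr_ge0 ?(ltW beta_gt0) //.
  by rewrite real_exprn_even_ge0 // rpredB // (ger_real s_le_t).
rewrite scalar_objective_high //.
have /orP[xs|sx] := real_leVge xR sigma0R; last by rewrite scalar_objective_high ?highq_t_le.
(* Below sigma0, lowq is decreasing: its slope at sigma0 is 2 (beta sigma0 - phi) <= 0. *)
rewrite scalar_objective_low //; apply: le_trans (highq_t_le _ sigma0R) _.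
have -> : lowq x = highq sigma0 +
    (sigma0 - x) * (2%:R * (phi - beta * sigma0) + alpha / 2%:R * (sigma0 - x)).
  by rewrite /lowq /highq /beta; ring.
rewrite lerDl mulr_ge0 ?subr_ge0 // addr_ge0 ?(mulr_ge0 half_alpha_ge0) ?subr_ge0 //.
by rewrite mulr_ge0 ?ler0n ?subr_ge0.
Qed.

Lemma f_alpha_real : f_alpha sigma0 alpha phi \is Num.real.
Proof.
have alphaR : alpha \is Num.real := ger0_real alpha_ge0.
rewrite /f_alpha; case: ifP => _; first exact: real0.
by case: ifP => _; rewrite ?(rpredM, rpredV, rpredB, rpredD, realn, real1).
Qed.

Lemma scalar_objective_f_alpha_le x : 0 <= x -> h (f_alpha sigma0 alpha phi) <= h x.
Proof.
move=> x0; have xR := ger0_real x0; rewrite /f_alpha.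
case: ifP => [ps|/negbT]; first exact: scalar_objective_min_below.
rewrite -real_leNgt // => sp.
case: ifP => [pb|/negbT]; first exact: scalar_objective_min_between.
rewrite -real_leNgt ?rpredM ?(gtr0_real beta_gt0) // => bp.
exact: scalar_objective_min_above.
Qed.

End ScalarProblem.

Section Decoupling.
Variables (C : numClosedFieldType) (m n : nat) (sigma0 alpha : C).
Variables (F : 'M[C]_(m, n)) (U : 'M[C]_m) (phi : nat -> C) (V : 'M[C]_n).
Hypothesis svdF : is_svd U phi V F.

Lemma objective_rdiag (t : nat -> C) :
  (forall j, (j < minn m n)%N -> t j \is Num.real) ->
  objective sigma0 alpha F (U *m rdiag m n t *m adjmx V) t =
  \sum_(j < minn m n) scalar_objective sigma0 alpha (phi j) (t j).
Proof.
case: svdF => uU uV phi0 _ -> tR.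
rewrite /objective /Nss -mulmxBl -mulmxBr rdiagB !frob2_unitary_rdiag // => [|j jr].
  by rewrite mulr_sumr -!big_split.
by rewrite rpredB ?tR ?(ger0_real (phi0 j jr)).
Qed.

Lemma objective_svd_ge (U' : 'M[C]_m) (s : nat -> C) (V' : 'M[C]_n) (X : 'M[C]_(m, n)) :
  is_svd U' s V' X ->
  \sum_(j < minn m n) scalar_objective sigma0 alpha (phi j) (s j) <=
  objective sigma0 alpha F X s.
Proof.
move=> svdX; have [uU uV phi0 _ Fdef] := svdF; have [uU' uV' s0 _ Xdef] := svdX.
have frob2F : frob2 F = \sum_(j < minn m n) phi j ^+ 2.
  by rewrite Fdef frob2_unitary_rdiag // => j /phi0/ger0_real.
have frob2X : frob2 X = \sum_(j < minn m n) s j ^+ 2.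
  by rewrite Xdef frob2_unitary_rdiag // => j /s0/ger0_real.
rewrite /objective /Nss /scalar_objective !big_split /= frob2X mulr_sumr lerD2r lerD2l.
have -> : \sum_(j < minn m n) (s j - phi j) ^+ 2 =
    \sum_(j < minn m n) s j ^+ 2 + \sum_(j < minn m n) phi j ^+ 2 -
    2%:R * \sum_(j < minn m n) s j * phi j.
  by rewrite mulr_sumr -big_split -sumrB; apply: eq_bigr => j _ /=; ring.
by rewrite frob2B frob2X frob2F lerD2l lerN2 (mxinner_svd_le svdF svdX).
Qed.

End Decoupling.

Theorem proposition3 (C : numClosedFieldType) (m n : nat) (sigma0 alpha : C)
  (F : 'M[C]_(m, n)) (U : 'M[C]_m) (phi : nat -> C) (V : 'M[C]_n) :
  0 < sigma0 -> 0 <= alpha -> is_svd U phi V F ->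
  forall (X : 'M[C]_(m, n)) (U' : 'M[C]_m) (s : nat -> C) (V' : 'M[C]_n),
    is_svd U' s V' X ->
    objective sigma0 alpha F (Sfun (f_alpha sigma0 alpha) U phi V)
      (fun j => f_alpha sigma0 alpha (phi j))
    <= objective sigma0 alpha F X s.
Proof.
move=> sigma0_gt0 alpha_ge0 svdF X U' s V' svdX.
have [_ _ phi0 _ _] := svdF; have [_ _ s0 _ _] := svdX.
rewrite /Sfun (objective_rdiag sigma0 alpha svdF) => [|j jr].
  apply: le_trans _ (objective_svd_ge sigma0 alpha svdF svdX); apply: ler_sum => j _.
  by apply: scalar_objective_f_alpha_le => //; [exact/ger0_real/phi0 | exact: s0].
exact/f_alpha_real/ger0_real/phi0.
Qed.
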